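(* For any two vertex-disjoint graphs $G$ and $H$, $f^-(G+H)=f^-(G)+f^-(H)$ and $f^+(G+H)=f^+(G)+f^+(H)$.
   Context: All graphs are finite, simple, undirected and connected. $N[v]=N(v)\cup\{v\}$ is the closed neighbourhood. A chromatic colouring of $G$ is a proper vertex colouring $c:V(G)\to\{c_1,\dots,c_{\chi(G)}\}$. With respect to $c$, a vertex $v$ yields a rainbow neighbourhood if $N[v]$ contains a vertex of each colour $c_1,\dots,c_{\chi(G)}$; $r_\chi(G)$ is the number of such vertices, and $r^-_\chi(G)$, $r^+_\chi(G)$ are its minimum and maximum over all chromatic colourings of $G$. Fading: for a set $F\subseteq V(G)$ (a fade set), the vertices of $F$ receive a transparent colour $c^\circ$ not among $c_1,\dots,c_{\chi(G)}$; after fading, $v$ yields a rainbow neighbourhood iff for every $i$ some vertex of $N[v]\setminus F$ has colour $c_i$. The fading number $f^-(G)$ is the maximum $|F|$ over chromatic colourings $c$ attaining $r_\chi=r^-_\chi(G)$ and fade sets $F$ such that, after fading $F$, the number of vertices yielding rainbow neighbourhoods is still $r^-_\chi(G)$; $f^+(G)$ is defined analogously with $r^+_\chi(G)$. The join $G_1+G_2$ of vertex-disjoint graphs is $G_1\cup G_2$ together with all edges joining a vertex of $G_1$ to a vertex of $G_2$. *)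

From mathcomp Require Import all_boot.
Set Implicit Arguments. Unset Strict Implicit. Unset Printing Implicit Defensive.

Section Graphs.
Variable T : finType.
Variable e : rel T.

Definition simple_graph : Prop := symmetric e /\ irreflexive e.
Definition connected_graph : Prop := (0 < #|T|) /\ forall x y : T, connect e x y.

Definition closed_nbh (v : T) : {set T} := [set u | (u == v) || e v u].

Definition proper_col (k : nat) (c : T -> 'I_k) : bool :=
  [forall x, forall y, e x y ==> (c x != c y)].

Definition colourable (k : nat) : bool :=
  [exists c : {ffun T -> 'I_k}, proper_col c].

Definition chi : nat := find colourable (iota 0 #|T|.+1).

Definition chromatic_col (c : {ffun T -> 'I_chi}) : bool := proper_col c.

(* v yields a rainbow neighbourhood w.r.t. c after fading F
   (F = set0 : no fading) *)
Definition rainbow (c : {ffun T -> 'I_chi}) (F : {set T}) (v : T) : bool :=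
  [forall i : 'I_chi, exists u, (u \in closed_nbh v :\: F) && (c u == i)].

Definition r_fade (c : {ffun T -> 'I_chi}) (F : {set T}) : nat :=
  #|[set v | rainbow c F v]|.

Definition r_chi (c : {ffun T -> 'I_chi}) : nat := r_fade c set0.

Definition r_minus : nat :=
  \big[minn/#|T|]_(c : {ffun T -> 'I_chi} | chromatic_col c) r_chi c.

Definition r_plus : nat :=
  \max_(c : {ffun T -> 'I_chi} | chromatic_col c) r_chi c.

Definition f_minus : nat :=
  \max_(c : {ffun T -> 'I_chi} | chromatic_col c && (r_chi c == r_minus))
    \max_(F : {set T} | r_fade c F == r_minus) #|F|.

Definition f_plus : nat :=
  \max_(c : {ffun T -> 'I_chi} | chromatic_col c && (r_chi c == r_plus))
    \max_(F : {set T} | r_fade c F == r_plus) #|F|.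

End Graphs.

(* join of two vertex-disjoint graphs, on the disjoint union T1 + T2 *)
Definition join (T1 T2 : finType) (e1 : rel T1) (e2 : rel T2) : rel (T1 + T2) :=
  fun x y => match x, y with
             | inl a, inl b => e1 a b
             | inr a, inr b => e2 a b
             | _, _ => true
             end.

From HB Require Import structures.
From mathcomp Require Import all_boot zify.
Set Implicit Arguments. Unset Strict Implicit. Unset Printing Implicit Defensive.

(* In G + H every vertex of G is adjacent to every vertex of H, so a proper
   colouring of G + H uses disjoint palettes on G and H.  Hence
   chi(G + H) = chi(G) + chi(H), and the chromatic colourings of G + H are
   exactly the unions of chromatic colourings of G and H on complementary
   palettes.  For such a union and a fade set F, a vertex of G yields a rainbow
   neighbourhood iff it does so in G after fading F on G and the unfaded part
   of H still shows every colour of H (and symmetrically for H).  Every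
   chromatic colouring has a vertex with a rainbow neighbourhood (otherwise one
   colour class could be recoloured away), so r_chi, r^- and r^+ are additive.
   Since both summands are positive, a fade set of G + H keeps r^-(G + H)
   (resp. r^+) rainbow vertices iff its parts on G and H keep r^-(G) and
   r^-(H) each, which gives additivity of the fading numbers. *)

(* minn has no unit on nat, so the AC lemmas of bigop need it as a semigroup law. *)
HB.instance Definition _ := SemiGroup.isComLaw.Build nat minn minnA minnC.

Lemma geq_bigmin_cond (I : finType) (P : pred I) (F : I -> nat) n i0 :
  P i0 -> \big[minn/n]_(i | P i) F i <= F i0.
Proof. by move=> Pi0; rewrite (big_rem_AC _ _ _ _ (mem_index_enum i0)) Pi0 geq_minl. Qed.

Lemma eq_bigmin_cond (I : finType) (P : pred I) (F : I -> nat) n i0 :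
  P i0 -> (forall i, P i -> F i <= n) ->
  exists2 i, P i & \big[minn/n]_(i | P i) F i = F i.
Proof.
move=> Pi0 leFn; case: (arg_minnP F Pi0) => i Pi minFi; exists i => //.
apply/eqP; rewrite eqn_leq geq_bigmin_cond //=.
by elim/big_ind: _ => [|x y|j /minFi //]; [exact: leFn | rewrite leq_min => -> ->].
Qed.

Lemma card_preimset_sum (T1 T2 : finType) (A : {set T1 + T2}) :
  #|A| = #|inl @^-1: A| + #|inr @^-1: A|.
Proof.
by rewrite -!sum1_card big_sumType; congr (_ + _); apply: eq_bigl => x; rewrite inE.
Qed.

Lemma card_set_andb (T : finType) (P : pred T) (b : bool) :
  #|[set x | P x && b]| = b * #|[set x | P x]|.
Proof.
case: b; rewrite ?mul1n ?mul0n; first by apply: eq_card => x; rewrite !inE andbT.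
by apply: eq_card0 => x; rewrite !inE andbF.
Qed.

Lemma factor_through_ord (T C : finType) (g : T -> C) n : #|g @: setT| = n ->
  exists h : 'I_n -> C, exists d : T -> 'I_n,
    [/\ injective h, forall x, h (d x) = g x & h @: setT = g @: setT].
Proof.
move=> <-; set S := g @: setT; pose h : 'I_#|S| -> C := enum_val.
have imS : h @: setT = S.
  apply/setP=> y; apply/imsetP/idP => [[i _ ->]|Sy]; first exact: enum_valP.
  by exists (enum_rank_in Sy y); rewrite ?in_setT // /h enum_rankK_in.
have h_onto x : exists i, h i = g x.
  have /imsetP[i _ ->] : g x \in h @: setT by rewrite imS imset_f.
  by exists i.
have [d hd] := fin_all_exists h_onto.
by exists h, d; split=> //; apply: enum_val_inj.
Qed.

Definition rainbow_on (T C : finType) (c : T -> C) (A : {set T}) : bool :=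
  [set: C] \subset c @: A.

Section SumColouring.
Variables (T1 T2 C1 C2 K : finType) (h1 : C1 -> K) (h2 : C2 -> K).

Definition sum_col (c1 : T1 -> C1) (c2 : T2 -> C2) (x : T1 + T2) : K :=
  match x with inl a => h1 (c1 a) | inr b => h2 (c2 b) end.

Hypotheses (h1_inj : injective h1) (h2_inj : injective h2).
Hypothesis h1_neq_h2 : forall i j, h1 i != h2 j.

Lemma sum_col_proper (e1 : rel T1) (e2 : rel T2) c1 c2 :
  (forall x y, e1 x y -> c1 x != c1 y) -> (forall x y, e2 x y -> c2 x != c2 y) ->
  forall x y, join e1 e2 x y -> sum_col c1 c2 x != sum_col c1 c2 y.
Proof.
move=> c1P c2P [a|b] [a'|b'] /= exy.
- by rewrite (inj_eq h1_inj) c1P.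
- exact: h1_neq_h2.
- by rewrite eq_sym h1_neq_h2.
- by rewrite (inj_eq h2_inj) c2P.
Qed.

Hypothesis h12_cover : h1 @: setT :|: h2 @: setT = setT.

Lemma rainbow_on_sum_col (c : T1 + T2 -> K) c1 c2 A :
  c =1 sum_col c1 c2 ->
  rainbow_on c A = rainbow_on c1 (inl @^-1: A) && rainbow_on c2 (inr @^-1: A).
Proof.
move=> cE; rewrite /rainbow_on (eq_imset _ cE).
apply/idP/andP => [onA | [/subsetP on1 /subsetP on2]].
  split; apply/subsetP => i _.
    have /imsetP[[a|b] Aa /= E] := subsetP onA (h1 i) (in_setT _).
      by rewrite (h1_inj E); apply: imset_f; rewrite inE.
    by move: (h1_neq_h2 i (c2 b)); rewrite E eqxx.
  have /imsetP[[a|b] Ab /= E] := subsetP onA (h2 i) (in_setT _).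
    by move: (h1_neq_h2 (c1 a) i); rewrite E eqxx.
  by rewrite (h2_inj E); apply: imset_f; rewrite inE.
apply/subsetP => k _; move: (in_setT k); rewrite -h12_cover.
case/setUP => /imsetP[i _ ->].
  have /imsetP[a + ->] := on1 i (in_setT _); rewrite inE => Aa.
  exact: (imset_f (sum_col c1 c2) Aa).
have /imsetP[b + ->] := on2 i (in_setT _); rewrite inE => Ab.
exact: (imset_f (sum_col c1 c2) Ab).
Qed.

End SumColouring.

Section Colourings.
Variables (T : finType) (e : rel T).

Lemma proper_colP k (c : T -> 'I_k) :
  reflect (forall x y, e x y -> c x != c y) (proper_col e c).
Proof.
apply: (iffP forallP) => [cP x y | cP x]; first exact/implyP/(forallP (cP x)).
by apply/forallP => y; apply/implyP/cP.
Qed.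

Lemma colourableP k :
  reflect (exists c : T -> 'I_k, forall x y, e x y -> c x != c y) (colourable e k).
Proof.
apply: (iffP existsP) => [[c /proper_colP] | [c cP]]; first by exists c.
by exists [ffun x => c x]; apply/proper_colP => x y; rewrite !ffunE; apply: cP.
Qed.

Lemma chi_min k : colourable e k -> chi e <= k.
Proof.
move=> colk; rewrite leqNgt; apply: contraL colk => lt_k.
have : k < size (iota 0 #|T|.+1) by apply: leq_trans lt_k (find_size _ _).
by rewrite size_iota => lt_kT; have := before_find 0 lt_k; rewrite nth_iota // => ->.
Qed.

Lemma chi_proper_image (C : finType) (c : T -> C) :
  (forall x y, e x y -> c x != c y) -> chi e <= #|c @: setT|.
Proof.
move=> cP; have [h [d [_ hd _]]] := factor_through_ord (erefl #|c @: setT|).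
apply/chi_min/colourableP; exists d => x y exy.
by apply: contra_neq (cP x y exy) => /(congr1 h); rewrite !hd.
Qed.

Hypothesis e_irr : irreflexive e.

Lemma chi_colourable : colourable e (chi e).
Proof.
have colT : colourable e #|T|.
  apply/colourableP; exists enum_rank => x y exy.
  by apply: contraTneq exy => /enum_rank_inj ->; rewrite e_irr.
have has_col : has (colourable e) (iota 0 #|T|.+1).
  by apply/hasP; exists #|T|; rewrite // mem_iota leq0n add0n ltnSn.
have := nth_find 0 has_col; rewrite has_find size_iota in has_col.
by rewrite nth_iota.
Qed.

Lemma chromatic_col_exists : exists c : {ffun T -> 'I_(chi e)}, chromatic_col c.
Proof. exact/existsP/chi_colourable. Qed.

Lemma chromatic_rainbow_on_setT (c : {ffun T -> 'I_(chi e)}) :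
  chromatic_col c -> rainbow_on c setT.
Proof.
move=> /proper_colP cP; rewrite /rainbow_on.
suff -> : c @: setT = [set: 'I_(chi e)] by [].
by apply/eqP; rewrite eqEcard subsetT cardsT card_ord chi_proper_image.
Qed.

Hypothesis e_sym : symmetric e.

Lemma chi_lt_card_no_rainbow (C : finType) (c : T -> C) (k : C) :
  (forall x y, e x y -> c x != c y) ->
  (forall v, ~~ rainbow_on c (closed_nbh e v)) -> chi e < #|C|.
Proof.
move=> cP no_rainbow.
have missing v : exists i, i \notin c @: closed_nbh e v.
  by have /subsetPn[i _ ?] := no_rainbow v; exists i.
have [miss missP] := fin_all_exists missing.
have miss_neq u v : u \in closed_nbh e v -> c u != miss v.
  by move=> uv; apply: contraNneq (missP v) => <-; apply: imset_f.
(* The colour class of k is independent, so each of its vertices can take a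
   colour missing from its own neighbourhood. *)
pose d v := if c v == k then miss v else c v.
have dP x y : e x y -> d x != d y.
  move=> exy; rewrite /d; case: (c x =P k) => [cx | _]; case: (c y =P k) => [cy | _].
  - by move: (cP x y exy); rewrite cx cy eqxx.
  - by rewrite eq_sym miss_neq // inE exy orbT.
  - by rewrite miss_neq // inE e_sym exy orbT.
  - exact: cP.
have d_neq_k v : d v \in [set~ k].
  rewrite /d !inE; case: (c v =P k) => [<- | /eqP //].
  by rewrite eq_sym miss_neq // inE eqxx.
have : chi e <= #|[set~ k]|.
  apply: leq_trans (chi_proper_image dP) (subset_leq_card _).
  by apply/subsetP => _ /imsetP[v _ ->].
rewrite cardsC1 => /leq_ltn_trans; apply; rewrite ltn_predL.
by apply/card_gt0P; exists k.
Qed.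

Lemma rainbowE (c : {ffun T -> 'I_(chi e)}) F v :
  rainbow c F v = rainbow_on c (closed_nbh e v :\: F).
Proof.
apply/forallP/subsetP => [rb i _ | on i].
  by have /existsP[u /andP[uN /eqP <-]] := rb i; apply: imset_f.
by have /imsetP[u uN ->] := on i (in_setT i); apply/existsP; exists u; rewrite uN eqxx.
Qed.

Lemma r_chi_gt0 (c : {ffun T -> 'I_(chi e)}) :
  chromatic_col c -> 0 < #|T| -> 0 < r_chi c.
Proof.
move=> /proper_colP cP /card_gt0P[x0 _]; rewrite lt0n cards_eq0; apply/negP => /eqP r0.
have no_rainbow v : ~~ rainbow_on c (closed_nbh e v).
  apply/negP => rb; have : v \in [set v | rainbow c set0 v] by rewrite inE rainbowE setD0.
  by rewrite r0 inE.
by have := chi_lt_card_no_rainbow (c x0) cP no_rainbow; rewrite card_ord ltnn.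
Qed.

End Colourings.

Section Fading.
Variables (T : finType) (e : rel T).
Implicit Types (c : {ffun T -> 'I_(chi e)}) (F : {set T}).

Lemma r_fade_le_r_chi c F : r_fade c F <= r_chi c.
Proof.
apply/subset_leq_card/subsetP => v; rewrite !inE !rainbowE setD0.
by move/subset_trans; apply; apply/imsetS/subsetDl.
Qed.

Lemma rainbow_on_unfaded c F : 0 < r_fade c F -> rainbow_on c (~: F).
Proof.
case/card_gt0P => v; rewrite inE rainbowE => /subset_trans; apply.
by apply/imsetS; rewrite setDE subsetIr.
Qed.

Definition fading_number (p : nat) : nat :=
  \max_(c : {ffun T -> 'I_(chi e)} | chromatic_col c && (r_chi c == p))
    \max_(F : {set T} | r_fade c F == p) #|F|.

Lemma leq_fading_number c F p :
  chromatic_col c -> r_chi c = p -> r_fade c F = p -> #|F| <= fading_number p.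
Proof.
move=> cc rc rF; apply: (bigmax_sup c); first by rewrite cc rc eqxx.
by apply: (leq_bigmax_cond F); rewrite rF.
Qed.

Lemma fading_numberP p :
  (exists2 c : {ffun T -> 'I_(chi e)}, chromatic_col c & r_chi c = p) ->
  exists c : {ffun T -> 'I_(chi e)}, exists F : {set T},
    [/\ chromatic_col c, r_chi c = p, r_fade c F = p & #|F| = fading_number p].
Proof.
case=> c0 cc0 rc0; have P_c0 : chromatic_col c0 && (r_chi c0 == p) by rewrite cc0 rc0 eqxx.
rewrite /fading_number (bigmax_eq_arg c0 P_c0).
case: arg_maxnP => // c /andP[cc /eqP rc] _.
have P_set0 : r_fade c set0 == p by apply/eqP.
rewrite (bigmax_eq_arg set0 P_set0); case: arg_maxnP => // F /eqP rF _.
by exists c, F.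
Qed.

Lemma f_minusE : f_minus e = fading_number (r_minus e).
Proof. by []. Qed.

Lemma f_plusE : f_plus e = fading_number (r_plus e).
Proof. by []. Qed.

Lemma r_minus_le c : chromatic_col c -> r_minus e <= r_chi c.
Proof. exact: geq_bigmin_cond. Qed.

Lemma r_plus_ge c : chromatic_col c -> r_chi c <= r_plus e.
Proof. exact: leq_bigmax_cond. Qed.

Hypothesis e_irr : irreflexive e.

Lemma r_minusP : exists2 c : {ffun T -> 'I_(chi e)}, chromatic_col c & r_chi c = r_minus e.
Proof.
have [c0 cc0] := chromatic_col_exists e_irr.
have [c cc rc] := eq_bigmin_cond (F := @r_chi _ e) (n := #|T|) cc0 (fun c _ => max_card _).
by exists c.
Qed.

Lemma r_plusP : exists2 c : {ffun T -> 'I_(chi e)}, chromatic_col c & r_chi c = r_plus e.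
Proof.
have [c0 cc0] := chromatic_col_exists e_irr.
rewrite /r_plus (bigmax_eq_arg c0 cc0).
by case: arg_maxnP => // c cc _; exists c.
Qed.

End Fading.

Section Join.
Variables (T1 T2 : finType) (e1 : rel T1) (e2 : rel T2).
Hypotheses (e1_irr : irreflexive e1) (e2_irr : irreflexive e2).
Local Notation J := (join e1 e2).

Lemma join_irreflexive : irreflexive J.
Proof. by case. Qed.

Lemma join_colour_classes (C : finType) (c : T1 + T2 -> C) :
  (forall x y, J x y -> c x != c y) ->
  let S1 := (c \o inl) @: setT in let S2 := (c \o inr) @: setT in
  [/\ chi e1 <= #|S1|, chi e2 <= #|S2| & #|S1 :|: S2| = #|S1| + #|S2|].
Proof.
move=> cP S1 S2; split.
- by apply: chi_proper_image => x y; apply: (cP (inl x) (inl y)).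
- by apply: chi_proper_image => x y; apply: (cP (inr x) (inr y)).
rewrite cardsU; suff -> : S1 :&: S2 = set0 by rewrite cards0 subn0.
apply/setP => k; rewrite !inE; apply/andP => -[/imsetP[a _ ->] /imsetP[b _ /= E]].
by move: (cP (inl a) (inr b) isT); rewrite /= E eqxx.
Qed.

Lemma chi_join : chi J = chi e1 + chi e2.
Proof.
apply/eqP; rewrite eqn_leq; apply/andP; split.
  have [c1 /proper_colP c1P] := chromatic_col_exists e1_irr.
  have [c2 /proper_colP c2P] := chromatic_col_exists e2_irr.
  apply/chi_min/colourableP; exists (sum_col (@lshift _ _) (@rshift _ _) c1 c2).
  apply: sum_col_proper c1P c2P; [exact: lshift_inj | exact: rshift_inj |].
  by move=> i j; rewrite eq_lrshift.
have [c /proper_colP cP] := chromatic_col_exists join_irreflexive.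
have [le1 le2 cardU] := join_colour_classes cP.
rewrite -[chi J]card_ord; apply: leq_trans (leq_add le1 le2) _.
by rewrite -cardU max_card.
Qed.

Definition r_fade_sum (c1 : {ffun T1 -> 'I_(chi e1)}) (c2 : {ffun T2 -> 'I_(chi e2)})
    (F : {set T1 + T2}) : nat :=
  rainbow_on c2 (~: inr @^-1: F) * r_fade c1 (inl @^-1: F) +
  rainbow_on c1 (~: inl @^-1: F) * r_fade c2 (inr @^-1: F).

Lemma r_fade_sum_col (c : {ffun T1 + T2 -> 'I_(chi J)})
    (c1 : {ffun T1 -> 'I_(chi e1)}) (c2 : {ffun T2 -> 'I_(chi e2)})
    (h1 : 'I_(chi e1) -> 'I_(chi J)) (h2 : 'I_(chi e2) -> 'I_(chi J)) :
  injective h1 -> injective h2 -> (forall i j, h1 i != h2 j) ->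
  h1 @: setT :|: h2 @: setT = setT -> c =1 sum_col h1 h2 c1 c2 ->
  r_fade c =1 r_fade_sum c1 c2.
Proof.
move=> h1_inj h2_inj h12 cover cE F.
have rainbow_onE A := rainbow_on_sum_col h1_inj h2_inj h12 cover A cE.
have rb_inl a : rainbow c F (inl a) =
    rainbow c1 (inl @^-1: F) a && rainbow_on c2 (~: inr @^-1: F).
  rewrite !rainbowE rainbow_onE.
  by congr (rainbow_on c1 _ && rainbow_on c2 _); apply/setP => x; rewrite !inE /= ?andbT.
have rb_inr b : rainbow c F (inr b) =
    rainbow c2 (inr @^-1: F) b && rainbow_on c1 (~: inl @^-1: F).
  rewrite !rainbowE rainbow_onE andbC.
  by congr (rainbow_on c2 _ && rainbow_on c1 _); apply/setP => x; rewrite !inE /= ?andbT.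
rewrite /r_fade_sum /r_fade card_preimset_sum -!card_set_andb.
by congr (_ + _); apply: eq_card => x; rewrite !inE ?rb_inl ?rb_inr.
Qed.

Lemma chromatic_join_split (c : {ffun T1 + T2 -> 'I_(chi J)}) :
  chromatic_col c ->
  exists c1 : {ffun T1 -> 'I_(chi e1)}, exists c2 : {ffun T2 -> 'I_(chi e2)},
    [/\ chromatic_col c1, chromatic_col c2 & r_fade c =1 r_fade_sum c1 c2].
Proof.
move=> /proper_colP cP; have [le1 le2 cardU] := join_colour_classes cP.
set S1 := (c \o inl) @: setT in le1 cardU *; set S2 := (c \o inr) @: setT in le2 cardU *.
have leU : #|S1| + #|S2| <= chi e1 + chi e2.
  by rewrite -cardU -chi_join; apply: leq_trans (max_card _) _; rewrite card_ord.
have [|h1 [d1 [h1_inj hd1 imh1]]] := factor_through_ord (g := c \o inl) (n := chi e1).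
  by apply/eqP; rewrite eqn_leq le1 -(leq_add2r #|S2|) (leq_trans leU) ?leq_add2l.
have [|h2 [d2 [h2_inj hd2 imh2]]] := factor_through_ord (g := c \o inr) (n := chi e2).
  by apply/eqP; rewrite eqn_leq le2 -(leq_add2l #|S1|) (leq_trans leU) ?leq_add2r.
exists [ffun a => d1 a], [ffun b => d2 b]; split.
- apply/proper_colP => x y exy; rewrite !ffunE.
  by apply: contra_neq (cP (inl x) (inl y) exy) => /(congr1 h1); rewrite !hd1.
- apply/proper_colP => x y exy; rewrite !ffunE.
  by apply: contra_neq (cP (inr x) (inr y) exy) => /(congr1 h2); rewrite !hd2.
apply: (r_fade_sum_col h1_inj h2_inj) => [i j | | [a | b]] /=; rewrite ?ffunE ?hd1 ?hd2 //.
  have /imsetP[a _ ->] : h1 i \in S1 by rewrite /S1 -imh1 imset_f.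
  have /imsetP[b _ ->] : h2 j \in S2 by rewrite /S2 -imh2 imset_f.
  exact: (cP (inl a) (inr b)).
apply/eqP; rewrite imh1 imh2 eqEcard subsetT cardsT card_ord cardU.
by apply: leq_trans (leq_add le1 le2); rewrite -chi_join.
Qed.

Lemma chromatic_join_sum (c1 : {ffun T1 -> 'I_(chi e1)}) (c2 : {ffun T2 -> 'I_(chi e2)}) :
  chromatic_col c1 -> chromatic_col c2 ->
  exists2 c : {ffun T1 + T2 -> 'I_(chi J)}, chromatic_col c & r_fade c =1 r_fade_sum c1 c2.
Proof.
move=> /proper_colP c1P /proper_colP c2P; pose E := esym chi_join.
pose h1 := cast_ord E \o @lshift _ (chi e2); pose h2 := cast_ord E \o @rshift (chi e1) _.
have h1_inj : injective h1 by move=> i j /cast_ord_inj/lshift_inj.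
have h2_inj : injective h2 by move=> i j /cast_ord_inj/rshift_inj.
have h12 i j : h1 i != h2 j by rewrite /= (inj_eq (@cast_ord_inj _ _ E)) eq_lrshift.
have cover : h1 @: setT :|: h2 @: setT = setT.
  apply/setP => k; rewrite !inE -[k](cast_ordKV E).
  case: (split_ordP (cast_ord (esym E) k)) => [i -> | j ->].
    by rewrite (imset_f h1).
  by rewrite (imset_f h2) ?orbT.
exists [ffun x => sum_col h1 h2 c1 c2 x].
  by apply/proper_colP => x y; rewrite !ffunE; apply: sum_col_proper.
by apply: (r_fade_sum_col h1_inj h2_inj h12 cover) => x; rewrite ffunE.
Qed.

Lemma r_chi_sum (c : {ffun T1 + T2 -> 'I_(chi J)})
    (c1 : {ffun T1 -> 'I_(chi e1)}) (c2 : {ffun T2 -> 'I_(chi e2)}) :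
  chromatic_col c1 -> chromatic_col c2 -> r_fade c =1 r_fade_sum c1 c2 ->
  r_chi c = r_chi c1 + r_chi c2.
Proof.
move=> cc1 cc2 cE; rewrite /r_chi cE /r_fade_sum !preimset0 !setC0.
by rewrite !chromatic_rainbow_on_setT // !mul1n.
Qed.

Lemma r_minus_join : r_minus J = r_minus e1 + r_minus e2.
Proof.
apply/eqP; rewrite eqn_leq; apply/andP; split.
  have [c1 cc1 <-] := r_minusP e1_irr; have [c2 cc2 <-] := r_minusP e2_irr.
  have [c cc cE] := chromatic_join_sum cc1 cc2.
  by rewrite -(r_chi_sum cc1 cc2 cE) r_minus_le.
have [c cc <-] := r_minusP join_irreflexive.
have [c1 [c2 [cc1 cc2 cE]]] := chromatic_join_split cc.
by rewrite (r_chi_sum cc1 cc2 cE) leq_add ?r_minus_le.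
Qed.

Lemma r_plus_join : r_plus J = r_plus e1 + r_plus e2.
Proof.
apply/eqP; rewrite eqn_leq; apply/andP; split.
  have [c cc <-] := r_plusP join_irreflexive.
  have [c1 [c2 [cc1 cc2 cE]]] := chromatic_join_split cc.
  by rewrite (r_chi_sum cc1 cc2 cE) leq_add ?r_plus_ge.
have [c1 cc1 <-] := r_plusP e1_irr; have [c2 cc2 <-] := r_plusP e2_irr.
have [c cc cE] := chromatic_join_sum cc1 cc2.
by rewrite -(r_chi_sum cc1 cc2 cE) r_plus_ge.
Qed.

Hypotheses (e1_sym : symmetric e1) (e2_sym : symmetric e2).
Hypotheses (T1_gt0 : 0 < #|T1|) (T2_gt0 : 0 < #|T2|).

Lemma r_fade_sum_eq_r_chi (d1 : {ffun T1 -> 'I_(chi e1)}) (d2 : {ffun T2 -> 'I_(chi e2)}) F :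
  chromatic_col d1 -> chromatic_col d2 -> r_fade_sum d1 d2 F = r_chi d1 + r_chi d2 ->
  r_fade d1 (inl @^-1: F) = r_chi d1 /\ r_fade d2 (inr @^-1: F) = r_chi d2.
Proof.
move=> cd1 cd2; rewrite /r_fade_sum.
have := r_fade_le_r_chi d1 (inl @^-1: F); have := r_fade_le_r_chi d2 (inr @^-1: F).
have := r_chi_gt0 e1_sym cd1 T1_gt0; have := r_chi_gt0 e2_sym cd2 T2_gt0.
by do 2 case: (rainbow_on _ _); rewrite /= ?mul1n ?mul0n; lia.
Qed.

Lemma fading_number_join_ge p1 p2 :
  (exists2 c1 : {ffun T1 -> 'I_(chi e1)}, chromatic_col c1 & r_chi c1 = p1) ->
  (exists2 c2 : {ffun T2 -> 'I_(chi e2)}, chromatic_col c2 & r_chi c2 = p2) ->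
  fading_number e1 p1 + fading_number e2 p2 <= fading_number J (p1 + p2).
Proof.
move=> opt1 opt2.
have [c1 [F1 [cc1 rc1 rF1 <-]]] := fading_numberP opt1.
have [c2 [F2 [cc2 rc2 rF2 <-]]] := fading_numberP opt2.
have [c cc cE] := chromatic_join_sum cc1 cc2.
have rc : r_chi c = p1 + p2 by rewrite (r_chi_sum cc1 cc2 cE) rc1 rc2.
pose F : {set T1 + T2} := [set x | match x with inl a => a \in F1 | inr b => b \in F2 end].
have F1E : inl @^-1: F = F1 by apply/setP => a; rewrite !inE.
have F2E : inr @^-1: F = F2 by apply/setP => b; rewrite !inE.
have rF : r_fade c F = p1 + p2.
  rewrite cE /r_fade_sum F1E F2E !rainbow_on_unfaded ?rF1 ?rF2 ?mul1n //.
    by rewrite -rc1 r_chi_gt0.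
  by rewrite -rc2 r_chi_gt0.
by rewrite -F1E -F2E -card_preimset_sum (leq_fading_number cc rc rF).
Qed.

Lemma fading_number_join_le p1 p2 :
  (exists2 c : {ffun T1 + T2 -> 'I_(chi J)}, chromatic_col c & r_chi c = p1 + p2) ->
  (forall (c1 : {ffun T1 -> 'I_(chi e1)}) (c2 : {ffun T2 -> 'I_(chi e2)}),
     chromatic_col c1 -> chromatic_col c2 ->
     r_chi c1 + r_chi c2 = p1 + p2 -> r_chi c1 = p1 /\ r_chi c2 = p2) ->
  fading_number J (p1 + p2) <= fading_number e1 p1 + fading_number e2 p2.
Proof.
move=> optJ extremal.
have [d [F [cd rd rF <-]]] := fading_numberP optJ.
have [d1 [d2 [cd1 cd2 dE]]] := chromatic_join_split cd.
have rdE : r_chi d1 + r_chi d2 = p1 + p2 by rewrite -(r_chi_sum cd1 cd2 dE).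
have [rd1 rd2] := extremal d1 d2 cd1 cd2 rdE.
have [rF1 rF2] : r_fade d1 (inl @^-1: F) = p1 /\ r_fade d2 (inr @^-1: F) = p2.
  by rewrite -rd1 -rd2; apply: r_fade_sum_eq_r_chi; rewrite // -dE rF -rdE.
by rewrite card_preimset_sum leq_add ?(leq_fading_number cd1 rd1 rF1)
                                    ?(leq_fading_number cd2 rd2 rF2).
Qed.

Lemma fading_number_join p1 p2 :
  (exists2 c1 : {ffun T1 -> 'I_(chi e1)}, chromatic_col c1 & r_chi c1 = p1) ->
  (exists2 c2 : {ffun T2 -> 'I_(chi e2)}, chromatic_col c2 & r_chi c2 = p2) ->
  (forall (c1 : {ffun T1 -> 'I_(chi e1)}) (c2 : {ffun T2 -> 'I_(chi e2)}),
     chromatic_col c1 -> chromatic_col c2 ->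
     r_chi c1 + r_chi c2 = p1 + p2 -> r_chi c1 = p1 /\ r_chi c2 = p2) ->
  fading_number J (p1 + p2) = fading_number e1 p1 + fading_number e2 p2.
Proof.
move=> [c1 cc1 rc1] [c2 cc2 rc2] extremal; apply/eqP; rewrite eqn_leq.
rewrite fading_number_join_ge ?andbT; [| by exists c1 | by exists c2].
apply: fading_number_join_le extremal.
have [c cc cE] := chromatic_join_sum cc1 cc2.
by exists c; rewrite // (r_chi_sum cc1 cc2 cE) rc1 rc2.
Qed.

Lemma f_minus_join : f_minus J = f_minus e1 + f_minus e2.
Proof.
rewrite !f_minusE r_minus_join; apply: fading_number_join.
- exact: r_minusP.
- exact: r_minusP.
move=> c1 c2 cc1 cc2; have := r_minus_le cc1; have := r_minus_le cc2; lia.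
Qed.

Lemma f_plus_join : f_plus J = f_plus e1 + f_plus e2.
Proof.
rewrite !f_plusE r_plus_join; apply: fading_number_join.
- exact: r_plusP.
- exact: r_plusP.
move=> c1 c2 cc1 cc2; have := r_plus_ge cc1; have := r_plus_ge cc2; lia.
Qed.

End Join.

Theorem theorem2p4 (T1 T2 : finType) (e1 : rel T1) (e2 : rel T2) :
  simple_graph e1 -> connected_graph e1 ->
  simple_graph e2 -> connected_graph e2 ->
  f_minus (join e1 e2) = f_minus e1 + f_minus e2 /\
  f_plus (join e1 e2) = f_plus e1 + f_plus e2.
Proof.
move=> [e1_sym e1_irr] [T1_gt0 _] [e2_sym e2_irr] [T2_gt0 _].
by split; [apply: f_minus_join | apply: f_plus_join].
Qed.
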